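(* Let $p$ be prime, $f:\mathrm{GF}(p)^n\to\mathrm{GF}(p)$ a polynomial function, and $t=x_{i_1}^{m_1}\cdots x_{i_k}^{m_k}$ with distinct indices and $1\le m_\ell\le p-1$. Write $f=t\,f_{S(t)}+r$ where no monomial of $r$ is divisible by $t$. Then $\deg(f_t)\le\deg(f_{S(t)})$. In particular, if $\deg(t)=\deg(f)-1$, then $f_t$ has total degree at most one (it is linear or constant).
   Context: Polynomial functions over $\mathrm{GF}(p)$ are represented by their unique polynomial of degree at most $p-1$ in each variable; $\deg$ is total degree, and $f_{S(t)}, r$ are uniquely determined by this representative. $f_t=\Delta^{(m_1)}_{\mathbf{e}_{i_1},\ldots,\mathbf{e}_{i_1}}\cdots\Delta^{(m_k)}_{\mathbf{e}_{i_k},\ldots,\mathbf{e}_{i_k}} f$ (difference $m_\ell$ times w.r.t. $x_{i_\ell}$ with step $1$), where $(\Delta_{\mathbf{a}} f)(\mathbf{x}) = f(\mathbf{x}+\mathbf{a})-f(\mathbf{x})$. *)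

From HB Require Import structures.
From mathcomp Require Import all_boot all_order all_algebra.
Set Implicit Arguments. Unset Strict Implicit. Unset Printing Implicit Defensive.
Import GRing.Theory.
Local Open Scope ring_scope.

Definition pt (p n : nat) := 'I_n -> 'F_p.
(* Exponent vectors of reduced monomials: each exponent in {0,..,p-1}. *)
Definition expo (p n : nat) := {ffun 'I_n -> 'I_p}.

Definition mono (p n : nat) (e : expo p n) (x : pt p n) : 'F_p :=
  \prod_(i < n) x i ^+ e i.

(* A reduced polynomial is given by its coefficient function c on reduced
   exponent vectors; peval c is the polynomial function it induces. *)
Definition peval (p n : nat) (c : expo p n -> 'F_p) (x : pt p n) : 'F_p :=
  \sum_(e : expo p n) c e * mono e x.

Definition represents (p n : nat) (c : expo p n -> 'F_p) (g : pt p n -> 'F_p) :=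
  forall x, g x = peval c x.

(* Total degree of a reduced polynomial (0 for the zero polynomial). *)
Definition tdeg (p n : nat) (c : expo p n -> 'F_p) : nat :=
  \max_(e : expo p n | c e != 0%R) (\sum_(i < n) (e i : nat))%N.

(* Coefficient of the reduced polynomial c at an arbitrary exponent vector
   E : 'I_n -> nat (zero if E is not reduced). *)
Definition rcoefN (p n : nat) (c : expo p n -> 'F_p) (E : 'I_n -> nat) : 'F_p :=
  \sum_(e : expo p n | [forall i, (e i : nat) == E i]) c e.

Definition shift (p n : nat) (x : pt p n) (i : 'I_n) : pt p n :=
  fun j => if j == i then x j + 1 else x j.

Definition fdiff (p n : nat) (g : pt p n -> 'F_p) (i : 'I_n) : pt p n -> 'F_p :=
  fun x => g (shift x i) - g x.

Definition tdiff (p n k : nat) (idx : 'I_k -> 'I_n) (m : 'I_k -> nat)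
  (g : pt p n -> 'F_p) : pt p n -> 'F_p :=
  foldr (fun l h => iter (m l) (fun h' => fdiff h' (idx l)) h) g (enum 'I_k).

Definition texp (n k : nat) (idx : 'I_k -> 'I_n) (m : 'I_k -> nat) (j : 'I_n) : nat :=
  (\sum_(l < k | idx l == j) m l)%N.

From HB Require Import structures.
From mathcomp Require Import all_boot all_order all_algebra.
From mathcomp Require Import finfield zify.
Import GRing.Theory.
Local Open Scope ring_scope.

Set Implicit Arguments.
Unset Strict Implicit.
Unset Printing Implicit Defensive.

(* A difference [Delta_i] sends [x_i ^+ a] to a combination of the [x_i ^+ b]
   with [b < a] and leaves the other exponents alone.  Hence [f_t] kills every
   monomial of [f] not divisible by [t], and sends [t * x^s] to a combination of
   monomials dividing [x^s].  So every monomial of [f_t] divides a monomial of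
   [f_S(t)], and this bounds the degree of any representative of [f_t] because
   reduced representatives are unique: the coefficient of [x^b] is recovered by
   summing against [prod_i dual_exp (b i) (x i)], using that the power sums
   [\sum_y y ^+ j] over [GF(p)] vanish for [j < p - 1].  Finally, [t * x^s]
   is a monomial of [f] for every monomial [x^s] of [f_S(t)], whence
   [deg t + deg f_S(t) <= deg f]. *)

Section PowerSums.

Variables (p : nat) (hp : prime p).

Definition power_sum (j : nat) : 'F_p := \sum_(y : 'F_p) y ^+ j.

Let p_gt1 : (1 < p)%N := prime_gt1 hp.

Lemma natr_Fp_char : (p%:R : 'F_p) = 0.
Proof. exact: pcharf0 (pchar_Fp hp). Qed.

Lemma expr_Fp_char (y : 'F_p) : y ^+ p = y.
Proof. by have := expf_card y; rewrite card_Fp. Qed.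

Lemma power_sum_addpred j : (0 < j)%N -> power_sum (j + p.-1) = power_sum j.
Proof.
move=> j_gt0; apply: eq_bigr => y _.
have -> : (j + p.-1 = j.-1 + p)%N by lia.
by rewrite exprD expr_Fp_char -exprSr prednK.
Qed.

Lemma power_sum_pred : power_sum p.-1 = -1.
Proof.
rewrite /power_sum (bigD1 0) //= expr0n (_ : p.-1 == 0%N = false); last by apply/eqP; lia.
rewrite add0r (eq_bigr (fun _ => 1)) => [|y y0]; last first.
  by apply: (mulfI y0); rewrite mulr1 -exprS prednK ?expr_Fp_char //; lia.
rewrite sumr_const (eq_card (B := predC1 0)) // cardC1 card_Fp //.
by apply/eqP; rewrite -subr_eq0 opprK -mulrSr prednK ?natr_Fp_char //; lia.
Qed.

(* For [0 < j < p - 1] some nonzero [a] has [a ^+ j != 1], as ['X^j - 1] has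
   at most [j] roots; the sum is then invariant under [y |-> a * y]. *)
Lemma power_sum_small j : (j < p.-1)%N -> power_sum j = 0.
Proof.
case: j => [_|j j_lt].
  rewrite /power_sum (eq_bigr (fun _ => 1)) => [|y _]; last by rewrite expr0.
  by rewrite sumr_const card_Fp // natr_Fp_char.
have [a a0 aj] : exists2 a : 'F_p, a != 0 & a ^+ j.+1 != 1.
  apply/exists_inP; apply: contraT => /exists_inPn all_roots.
  have q_neq0 : 'X^(j.+1) - 1 != 0 :> {poly 'F_p}.
    by rewrite -size_poly_gt0 size_XnsubC.
  have := max_poly_roots q_neq0 _ (enum_uniq (predC1 (0 : 'F_p))).
  rewrite -cardE cardC1 card_Fp // size_XnsubC //.
  suff -> : all (root ('X^(j.+1) - 1)) (enum (predC1 (0 : 'F_p))) by move/(_ isT); lia.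
  apply/allP => y; rewrite mem_enum => /all_roots y1.
  by rewrite rootE !hornerE subr_eq0 negbK in y1 *.
have : power_sum j.+1 * (a ^+ j.+1 - 1) = 0.
  apply/eqP; rewrite mulrBr mulr1 subr_eq0; apply/eqP.
  rewrite /power_sum [in RHS](reindex_inj (mulfI a0)) mulr_suml.
  by apply: eq_bigr => y _; rewrite exprMn mulrC.
by move/eqP; rewrite mulf_eq0 subr_eq0 (negbTE aj) orbF => /eqP.
Qed.

Definition dual_exp (b : nat) (y : 'F_p) : 'F_p :=
  if b == 0%N then y ^+ p.-1 - 1 else y ^+ (p.-1 - b).

Lemma sum_exp_dual_exp a b : (a < p)%N -> (b < p)%N ->
  \sum_(y : 'F_p) y ^+ a * dual_exp b y = if a == b then -1 else 0.
Proof.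
rewrite /dual_exp => a_lt; case: b => [|b] b_lt /=.
  under eq_bigr do rewrite mulrBr mulr1 -exprD.
  rewrite sumrB -/(power_sum _) -/(power_sum _).
  case: a a_lt => [|a] a_lt /=; last by rewrite power_sum_addpred // subrr.
  by rewrite add0n power_sum_pred (power_sum_small (j := 0)) ?subr0 //; lia.
under eq_bigr do rewrite -exprD.
rewrite -/(power_sum _); case: (ltngtP a b.+1) => [a_lt_b|b_lt_a|->].
- by rewrite power_sum_small ?ltn_eqF //; lia.
- rewrite (_ : (a + _ = (a - b.+1) + p.-1)%N); last by lia.
  by rewrite power_sum_addpred ?power_sum_small ?gtn_eqF //; lia.
- by rewrite subnKC ?power_sum_pred //; lia.
Qed.

End PowerSums.

Section Representation.

Variables (p n : nat).

Lemma sum_peval_dual (hp : prime p) (c : expo p n -> 'F_p) (b : expo p n) :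
  \sum_(x : {ffun 'I_n -> 'F_p}) peval c x * \prod_(i < n) dual_exp (b i) (x i)
  = c b * (-1) ^+ n.
Proof.
under eq_bigr do rewrite mulr_suml.
rewrite exchange_big /=.
under eq_bigr => e _.
  under eq_bigr do rewrite -mulrA /mono -big_split /=.
  rewrite -mulr_sumr -(bigA_distr_bigA (fun i y => y ^+ e i * dual_exp (b i) y)).
  under eq_bigr do rewrite sum_exp_dual_exp //.
  over.
rewrite (bigD1 b) //= [X in _ + X]big1 ?addr0 => [|e /eqP e_neq_b].
  by under eq_bigr do rewrite eqxx; rewrite prodr_const card_ord.
have [i ei_neq] : exists i, (e i : nat) != b i.
  by apply/existsP; apply: contra_notT e_neq_b => /existsPn eq_eb;
     apply/ffunP => i; apply/val_inj/eqP/negPn/eq_eb.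
by rewrite (bigD1 i) //= (negbTE ei_neq) mul0r mulr0.
Qed.

Lemma peval_inj (hp : prime p) (c1 c2 : expo p n -> 'F_p) :
  peval c1 =1 peval c2 -> c1 =1 c2.
Proof.
move=> eq_c e; apply: (@mulIf _ ((-1) ^+ n)); first by rewrite signr_eq0.
by rewrite -!sum_peval_dual //; apply: eq_bigr => x _; rewrite eq_c.
Qed.

Definition spanned (P : expo p n -> Prop) (g : pt p n -> 'F_p) : Prop :=
  exists2 c, represents c g & forall e, c e != 0 -> P e.

Lemma eq_spanned (P : expo p n -> Prop) (g h : pt p n -> 'F_p) :
  g =1 h -> spanned P g -> spanned P h.
Proof. by move=> eq_gh [c rep_c supp_c]; exists c => // x; rewrite -eq_gh. Qed.

Lemma sub_spanned (P Q : expo p n -> Prop) (g : pt p n -> 'F_p) :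
  (forall e, P e -> Q e) -> spanned P g -> spanned Q g.
Proof. by move=> PQ [c rep_c supp_c]; exists c => // e /supp_c /PQ. Qed.

Lemma spanned0 (P : expo p n -> Prop) : spanned P (fun _ => 0).
Proof.
exists (fun _ => 0) => [x|e]; last by rewrite eqxx.
by rewrite /peval big1 // => e _; rewrite mul0r.
Qed.

Lemma spannedD (P : expo p n -> Prop) (g h : pt p n -> 'F_p) :
  spanned P g -> spanned P h -> spanned P (fun x => g x + h x).
Proof.
move=> [c rep_c supp_c] [d rep_d supp_d]; exists (fun e => c e + d e).
  move=> x; rewrite rep_c rep_d /peval -big_split.
  by apply: eq_bigr => e _; rewrite mulrDl.
by move=> e; have [->|/supp_c //] := eqVneq (c e) 0; rewrite add0r => /supp_d.
Qed.

Lemma spannedZ (P : expo p n -> Prop) (a : 'F_p) (g : pt p n -> 'F_p) :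
  spanned P g -> spanned P (fun x => a * g x).
Proof.
move=> [c rep_c supp_c]; exists (fun e => a * c e).
  by move=> x; rewrite rep_c /peval mulr_sumr; apply: eq_bigr => e _; rewrite mulrA.
by move=> e; rewrite mulf_eq0 negb_or => /andP[_ /supp_c].
Qed.

Lemma spanned_sum (P : expo p n -> Prop) (I : Type) (r : seq I)
    (F : I -> pt p n -> 'F_p) :
  (forall i, spanned P (F i)) -> spanned P (fun x => \sum_(i <- r) F i x).
Proof.
move=> spanF; elim: r => [|i r IHr].
  by apply: eq_spanned (spanned0 P) => x; rewrite big_nil.
by apply: eq_spanned (spannedD (spanF i) IHr) => x; rewrite big_cons.
Qed.

Lemma spanned_mono (P : expo p n -> Prop) (e : expo p n) : P e -> spanned P (mono e).
Proof.
move=> Pe; exists (fun e' => (e' == e)%:R) => [x|e'].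
  rewrite /peval (bigD1 e) //= eqxx mul1r big1 ?addr0 // => e' /negbTE ->.
  by rewrite mul0r.
by case: (e' =P e) => [->|]; rewrite ?eqxx.
Qed.

Lemma spanned_eq0 (P : expo p n -> Prop) (g : pt p n -> 'F_p) :
  (forall e, ~ P e) -> spanned P g -> g =1 (fun _ => 0).
Proof.
move=> notP [c rep_c supp_c] x; rewrite rep_c /peval big1 // => e _.
by have [->|/supp_c /notP] := eqVneq (c e) 0; rewrite ?mul0r.
Qed.

Lemma spanned_support (hp : prime p) (P : expo p n -> Prop) (c : expo p n -> 'F_p)
    (g : pt p n -> 'F_p) :
  represents c g -> spanned P g -> forall e, c e != 0 -> P e.
Proof.
move=> rep_c [d rep_d supp_d] e; rewrite (@peval_inj hp c d) => [/supp_d //|x].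
by rewrite -rep_c -rep_d.
Qed.

End Representation.

Section Differences.

Variables (p n : nat).

Definition linear_op (T : (pt p n -> 'F_p) -> pt p n -> 'F_p) : Prop :=
  forall (c : expo p n -> 'F_p) (F : expo p n -> pt p n -> 'F_p) (g : pt p n -> 'F_p),
  (forall x, g x = \sum_e c e * F e x) -> forall x, T g x = \sum_e c e * T (F e) x.

Lemma linear_fdiff (i : 'I_n) : linear_op (fun h => fdiff h i).
Proof.
move=> c F g eq_g x; rewrite /fdiff !eq_g -sumrB.
by apply: eq_bigr => e _; rewrite mulrBr.
Qed.

Lemma linear_iter (T : (pt p n -> 'F_p) -> pt p n -> 'F_p) (r : nat) :
  linear_op T -> linear_op (iter r T).
Proof.
move=> linT; elim: r => [//|r IHr] c F g eq_g /=.
exact: linT (IHr c F g eq_g).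
Qed.

Definition set_exp (e : expo p n) (i : 'I_n) (b : 'I_(e i)) : expo p n :=
  [ffun j => if j == i then widen_ord (ltnW (ltn_ord (e i))) b else e j].
Arguments set_exp : clear implicits.

Lemma fdiff_mono (e : expo p n) (i : 'I_n) (x : pt p n) :
  fdiff (mono e) i x = \sum_(b < e i) mono (set_exp e i b) x *+ 'C(e i, b).
Proof.
set R := \prod_(j < n | j != i) x j ^+ e j.
have mono_shift : mono e (shift x i) = (x i + 1) ^+ e i * R.
  rewrite /mono (bigD1 i) //= /shift eqxx; congr (_ * _).
  by apply: eq_bigr => j /negbTE ->.
have mono_x : mono e x = x i ^+ e i * R by rewrite /mono (bigD1 i).
have mono_set b : mono (set_exp e i b) x = x i ^+ b * R.
  rewrite /mono (bigD1 i) //= ffunE eqxx /=; congr (_ * _).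
  by apply: eq_bigr => j /negbTE j_neq_i; rewrite ffunE j_neq_i.
rewrite /fdiff mono_shift mono_x exprD1n big_ord_recr /= binn mulr1n mulrDl addrK.
by rewrite mulr_suml; apply: eq_bigr => b _; rewrite mono_set mulrnAl.
Qed.

Definition below_by (D B : 'I_n -> nat) (e : expo p n) : Prop :=
  forall j, (e j + D j <= B j)%N.

Lemma spanned_fdiff (D B : 'I_n -> nat) (i : 'I_n) (g : pt p n -> 'F_p) :
  spanned (below_by D B) g ->
  spanned (below_by (fun j => D j + (j == i))%N B) (fdiff g i).
Proof.
move=> [c rep_c supp_c].
apply: eq_spanned (fun x => esym (linear_fdiff i rep_c x)) _.
apply: spanned_sum => e; have [->|/supp_c below_e] := eqVneq (c e) 0.
  by apply: eq_spanned (spanned0 _) => x; rewrite mul0r.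
apply/spannedZ/(eq_spanned (fun x => esym (fdiff_mono e i x)))/spanned_sum => b.
apply: eq_spanned (fun x => mulr_natl _ _) _; apply/spannedZ/spanned_mono => j.
rewrite ffunE; have := below_e j; have := ltn_ord b.
by case: eqVneq => [->|] /=; lia.
Qed.

Lemma spanned_iter_fdiff (D B : 'I_n -> nat) (i : 'I_n) (r : nat)
    (g : pt p n -> 'F_p) :
  spanned (below_by D B) g ->
  spanned (below_by (fun j => if j == i then D j + r else D j)%N B)
    (iter r (fun h => fdiff h i) g).
Proof.
move=> span_g; elim: r => [|r IHr] /=.
  by apply: sub_spanned span_g => e below_e j; case: eqP; rewrite ?addn0.
apply: sub_spanned (spanned_fdiff i IHr) => e below_e j.
by have := below_e j; case: eqP; lia.
Qed.

Section Along.

Variables (k : nat) (idx : 'I_k -> 'I_n) (m : 'I_k -> nat).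

(* [tdiff idx m] is [diff_along (enum 'I_k)]. *)
Definition diff_along (s : seq 'I_k) (g : pt p n -> 'F_p) : pt p n -> 'F_p :=
  foldr (fun l h => iter (m l) (fun h' => fdiff h' (idx l)) h) g s.

Lemma linear_diff_along (s : seq 'I_k) : linear_op (diff_along s).
Proof.
elim: s => [//|l s IHs] c F g eq_g x /=.
exact: linear_iter (linear_fdiff _) _ _ _ (IHs c F g eq_g) x.
Qed.

Lemma spanned_diff_along (D B : 'I_n -> nat) (s : seq 'I_k) (g : pt p n -> 'F_p) :
  spanned (below_by D B) g ->
  spanned (below_by (fun j => D j + \sum_(l <- s | idx l == j) m l)%N B)
    (diff_along s g).
Proof.
move=> span_g; elim: s => [|l s IHs] /=.
  by apply: sub_spanned span_g => e below_e j; rewrite big_nil addn0.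
apply: sub_spanned (spanned_iter_fdiff (idx l) (m l) IHs) => e below_e j.
by have := below_e j; rewrite big_cons eq_sym; case: eqP; lia.
Qed.

Lemma spanned_tdiff_mono (e : expo p n) :
  spanned (below_by (texp idx m) (fun j => e j)) (tdiff idx m (mono e)).
Proof.
have span_e : spanned (below_by (fun _ => 0%N) (fun j => e j)) (mono e).
  by apply: spanned_mono => j; rewrite addn0.
apply: sub_spanned (spanned_diff_along (enum 'I_k) span_e) => e' below_e' j.
by have := below_e' j; rewrite add0n big_enum_cond.
Qed.

End Along.

End Differences.

Section Coefficients.

Variables (p n : nat).

Definition mdeg (e : expo p n) : nat := (\sum_(i < n) (e i : nat))%N.

Lemma mdeg_le_tdeg (c : expo p n -> 'F_p) (e : expo p n) :
  c e != 0 -> (mdeg e <= tdeg c)%N.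
Proof. exact: (@leq_bigmax_cond _ (fun e => c e != 0) mdeg). Qed.

Lemma eq_rcoefN (c : expo p n -> 'F_p) (E1 E2 : 'I_n -> nat) :
  E1 =1 E2 -> rcoefN c E1 = rcoefN c E2.
Proof. by move=> eq_E; apply: eq_bigl => e; apply: eq_forallb => j; rewrite eq_E. Qed.

Lemma rcoefN_expo (c : expo p n -> 'F_p) (e : expo p n) :
  rcoefN c (fun j => e j) = c e.
Proof.
rewrite /rcoefN (big_pred1 e) // => e'; apply/forallP/eqP => [eq_e'|-> //].
by apply/ffunP => i; apply/val_inj/eqP/eq_e'.
Qed.

Lemma rcoefN_neq0 (c : expo p n -> 'F_p) (E : 'I_n -> nat) :
  rcoefN c E != 0 -> exists2 e, c e != 0 & forall j, (e j : nat) = E j.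
Proof.
move=> cE_neq0; have /exists_inP[e ce_neq0 /forallP eq_eE] :
    [exists e in [pred e | c e != 0], [forall j, (e j : nat) == E j]].
  apply: contraNT cE_neq0 => /exists_inPn none; apply/eqP/big1 => e eq_eE.
  by apply/eqP; apply: contraTT eq_eE; exact: none.
by exists e => // j; apply/eqP.
Qed.

End Coefficients.

Section Decomposition.

Variables (p n k : nat) (idx : 'I_k -> 'I_n) (m : 'I_k -> nat).
Variables (c cS cr : expo p n -> 'F_p).

Local Notation t := (texp idx m).

Hypothesis hdec : forall E : 'I_n -> nat,
  rcoefN c E =
    (if [forall j, t j <= E j]%N then rcoefN cS (fun j => E j - t j)%N else 0)
    + rcoefN cr E.
Hypothesis hr : forall e, cr e != 0 -> ~~ [forall j, t j <= e j]%N.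

Lemma rcoefN_divisible (E : 'I_n -> nat) :
  (forall j, t j <= E j)%N -> rcoefN c E = rcoefN cS (fun j => E j - t j)%N.
Proof.
move=> t_le_E; have t_dvd_E : [forall j, t j <= E j]%N by apply/forallP.
rewrite hdec t_dvd_E [rcoefN cr E]big1 ?addr0 // => e /forallP eq_eE.
have t_dvd_e : [forall j, t j <= e j]%N.
  by apply/forallP => j; rewrite (eqP (eq_eE j)).
by apply/eqP; apply: contraTT t_dvd_e; exact: hr.
Qed.

Lemma quotient_coef (e : expo p n) :
  c e != 0 -> (forall j, t j <= e j)%N ->
  exists2 s, cS s != 0 & forall j, (s j : nat) = (e j - t j)%N.
Proof.
by move=> ce_neq0 /rcoefN_divisible; rewrite rcoefN_expo => eq_ce;
   apply: rcoefN_neq0; rewrite -eq_ce.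
Qed.

Lemma mdeg_quotient_le (s : expo p n) :
  cS s != 0 -> (mdeg s + \sum_(l < k) m l <= tdeg c)%N.
Proof.
move=> cSs_neq0; pose E j := (s j + t j)%N.
have cE : rcoefN c E = cS s.
  rewrite rcoefN_divisible => [|j]; last exact: leq_addl.
  by rewrite -rcoefN_expo; apply: eq_rcoefN => j; rewrite addnK.
have [e ce_neq0 eq_eE] : exists2 e, c e != 0 & forall j, (e j : nat) = E j.
  by apply: rcoefN_neq0; rewrite cE.
apply: leq_trans (mdeg_le_tdeg ce_neq0); rewrite /mdeg (eq_bigr _ (fun j _ => eq_eE j)).
by rewrite big_split /= (partition_big idx predT).
Qed.

Lemma spanned_tdiff :
  spanned (fun e => exists2 s, cS s != 0 & forall j, (e j <= s j)%N)
    (tdiff idx m (peval c)).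
Proof.
have lin := linear_diff_along idx m (enum 'I_k) (F := @mono p n)
  (fun x => erefl (peval c x)).
apply: eq_spanned (fun x => esym (lin x)) _; apply: spanned_sum => e.
have [->|ce_neq0] := eqVneq (c e) 0.
  by apply: eq_spanned (spanned0 _) => x; rewrite mul0r.
apply/spannedZ/(sub_spanned _ (spanned_tdiff_mono idx m e)) => e' below_e'.
have [|s cSs_neq0 eq_s] := quotient_coef ce_neq0.
  by move=> j; have := below_e' j; lia.
by exists s => // j; have := below_e' j; rewrite eq_s; lia.
Qed.

End Decomposition.

Theorem mainTheorem8 (p n k : nat) (hp : prime p)
  (idx : 'I_k -> 'I_n) (m : 'I_k -> nat)
  (hidx : injective idx) (hm : forall l, (0 < m l < p)%N)
  (c cS cr : expo p n -> 'F_p)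
  (hdec : forall E : 'I_n -> nat,
     rcoefN c E =
       (if [forall j, texp idx m j <= E j]%N
        then rcoefN cS (fun j => E j - texp idx m j)%N else 0)
       + rcoefN cr E)
  (hr : forall e, cr e != 0 -> ~~ [forall j, texp idx m j <= e j]%N) :
  let ft := tdiff idx m (peval c) in
  (exists c', represents c' ft) /\
  (forall c', represents c' ft -> (tdeg c' <= tdeg cS)%N) /\
  ((forall e, cS e = 0) -> forall x, ft x = 0) /\
  ((\sum_(l < k) m l).+1 = tdeg c ->
     forall c', represents c' ft -> (tdeg c' <= 1)%N).
Proof.
move=> ft; have span_ft := spanned_tdiff hdec hr.
have tdeg_ft c' : represents c' ft -> (tdeg c' <= tdeg cS)%N.
  move=> rep_c'; apply/bigmax_leqP => e /(spanned_support hp rep_c' span_ft).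
  move=> [s cSs_neq0 le_es]; apply: leq_trans (mdeg_le_tdeg cSs_neq0).
  exact: leq_sum.
split; first by case: span_ft => c' rep_c'; exists c'.
split=> //; split.
  by move=> cS0; apply: spanned_eq0 span_ft => e [s]; rewrite cS0 eqxx.
move=> tdeg_c c' /tdeg_ft /leq_trans; apply; apply/bigmax_leqP => s cSs_neq0.
by have := mdeg_quotient_le hdec hr cSs_neq0; rewrite -tdeg_c /mdeg; lia.
Qed.
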